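(* Let $C$ be a field of characteristic zero, $L\in C[x][\partial]$ of order $r_L$, and $P\in C[x,y]$ with $\deg_yP=r_P$, square-free in $C(x)[y]$ and without non-constant divisors in $\bar C[y]$. Let $f_1,\dots,f_{r_L}$ be $C$-linearly independent solutions of $L$, $g_1,\dots,g_{r_P}$ distinct solutions of $P$, $V$ the $C$-span of all $f_i\circ g_j$, and $r=\dim_CV$. Let $A(x,y)\in C[x,y]^{(r+1)\times r_L}$ be a matrix such that $f\in V$ if and only if $(f,f',\dots,f^{(r)})^T$ lies in the column space of $\begin{pmatrix}A(x,g_1)&\cdots&A(x,g_{r_P})\end{pmatrix}$. Then there exists a matrix $B(y)\in C[y]^{(r_Lr_P-r)\times r_L}$ whose entries have degree at most $r_P-1$ such that the $(r_Lr_P+1)\times r_Lr_P$ matrix \[ \begin{pmatrix}A(x,g_1)&\cdots&A(x,g_{r_P})\\ B(g_1)&\cdots&B(g_{r_P})\end{pmatrix} \] has rank $r_Lr_P$.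
   Context: All functions $g_j$, $f_i\circ g_j$ and $f$ are regarded as elements of a common differential field $K\supseteq C(x)$ (derivation extending $d/dx$) whose field of constants is $C$; e.g. for $C=\mathbb C$, meromorphic functions on a connected open set where they are all analytic. Column spaces and ranks are taken over $K$. A solution $g$ of $P$ satisfies $P(x,g(x))=0$; a solution $f$ of $L$ satisfies $L(f)=0$. *)

From HB Require Import structures.
From mathcomp Require Import all_boot all_order all_algebra.
Set Implicit Arguments. Unset Strict Implicit. Unset Printing Implicit Defensive.
Import Order.TTheory GRing.Theory Num.Theory.
Local Open Scope ring_scope.

Definition is_derivation (K : fieldType) (D : K -> K) : Prop :=
  (forall a b, D (a + b) = D a + D b) /\ (forall a b, D (a * b) = D a * b + a * D b).

(* (K, D) is a differential field containing C(x) (C embedded by iota,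
   x transcendental over C, D x = 1, so D extends d/dx), whose field of
   constants is exactly (the image of) C. *)
Definition diff_ext_Cx (C K : fieldType) (iota : {rmorphism C -> K}) (D : K -> K)
    (x : K) : Prop :=
  [/\ is_derivation D, D x = 1,
      (forall p : {poly C}, p != 0 -> (map_poly iota p).[x] != 0)
    & (forall k : K, D k = 0 <-> exists c : C, k = iota c)].

Definition evC (C K : fieldType) (iota : {rmorphism C -> K}) (p : {poly C}) (t : K) : K :=
  (map_poly iota p).[t].

(* Evaluation of P(x,y) in C[x][y] (outer variable y) at x := t, y := u. *)
Definition ev2 (C K : fieldType) (iota : {rmorphism C -> K})
    (P : {poly {poly C}}) (t u : K) : K :=
  (map_poly (fun p => evC iota p t) P).[u].

Definition applyL (C K : fieldType) (iota : {rmorphism C -> K}) (D : K -> K)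
    (x : K) (L : seq {poly C}) (f : K) : K :=
  \sum_(k < size L) evC iota L`_k x * iter k D f.

Definition C_indep (C K : fieldType) (iota : {rmorphism C -> K}) (n : nat)
    (b : 'I_n -> K) : Prop :=
  forall c : 'I_n -> C, \sum_(k < n) iota (c k) * b k = 0 -> forall k, c k = 0.

Definition in_Cspan (C K : fieldType) (iota : {rmorphism C -> K}) (n : nat)
    (b : 'I_n -> K) (f : K) : Prop :=
  exists c : 'I_n -> C, f = \sum_(k < n) iota (c k) * b k.

Definition dimC_eq (C K : fieldType) (iota : {rmorphism C -> K}) (V : K -> Prop)
    (r : nat) : Prop :=
  exists b : 'I_r -> K,
    C_indep iota b /\ (forall f, V f <-> in_Cspan iota b f).

Definition wvec (K : fieldType) (D : K -> K) (r : nat) (f : K) : 'cV[K]_r.+1 :=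
  \col_(i < r.+1) iter i D f.

(* Horizontal block concatenation ( F 0 | F 1 | ... | F (q-1) ). *)
Definition blockrow (K : Type) (m q n : nat) (F : 'I_q -> 'M[K]_(m, n)) :
    'M[K]_(m, q * n) :=
  \matrix_(a < m, c < q * n) mxvec (\matrix_(j < q, k < n) F j a k) 0 c.

Definition sqfree_Cx_y (C : fieldType) (P : {poly {poly C}}) : Prop :=
  forall Q : {poly {fraction {poly C}}},
    (1 < size Q)%N -> ~~ (Q * Q %| map_poly (@FracField.tofrac _) P).

Definition is_alg_closure (C : fieldType) (E : closedFieldType)
    (iotaE : {rmorphism C -> E}) : Prop :=
  forall e : E, exists p : {poly C}, p != 0 /\ root (map_poly iotaE p) e.

Definition no_y_divisor (C : fieldType) (E : closedFieldType)
    (iotaE : {rmorphism C -> E}) (P : {poly {poly C}}) : Prop :=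
  forall Q : {poly E}, (1 < size Q)%N ->
    ~ exists R : {poly {poly E}},
        map_poly (map_poly iotaE) P = map_poly polyC Q * R.

From HB Require Import structures.
From mathcomp Require Import all_boot all_order all_algebra.
Import GRing.Theory.
Local Open Scope ring_scope.

Set Implicit Arguments. Unset Strict Implicit.

(* The Wronskian vectors (h, h', ..., h^(r)) of the elements h of V lie in the
   column space of the A-block.  Since the constants of K are exactly C, a
   C-basis of V has a nonsingular Wronskian, so the A-block has rank at least r.
   The rows y^d e_k (d < r_P, k < r_L) evaluated at the distinct g_1, ..., g_{r_P}
   span K^(r_L r_P) (Vandermonde), so r_L r_P - r of them, padded with zero rows,
   complete the A-block to full rank. *)

Section Wronskian.

Variables (C K : fieldType) (iota : {rmorphism C -> K}) (D : K -> K).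
Hypothesis D_derivation : is_derivation D.

Lemma derivation0 : D 0 = 0.
Proof.
have D00 := D_derivation.1 0 0; rewrite addr0 in D00.
by apply: (@addrI _ (D 0)); rewrite -D00 addr0.
Qed.

Lemma derivation1 : D 1 = 0.
Proof.
have D11 := D_derivation.2 1 1; rewrite !mul1r mulr1 in D11.
by apply: (@addrI _ (D 1)); rewrite -D11 addr0.
Qed.

Lemma derivation_sum (I : Type) (s : seq I) (P : pred I) (F : I -> K) :
  D (\sum_(i <- s | P i) F i) = \sum_(i <- s | P i) D (F i).
Proof. exact: (big_morph D D_derivation.1 derivation0). Qed.

Lemma derivation_relation n (a b : 'I_n -> K) k :
    \sum_i a i * iter k D (b i) = 0 -> \sum_i a i * iter k.+1 D (b i) = 0 ->
  \sum_i D (a i) * iter k D (b i) = 0.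
Proof.
move=> rel_k rel_Sk; have := congr1 D rel_k.
rewrite derivation_sum derivation0 (eq_bigr _ (fun i _ => D_derivation.2 _ _)).
by rewrite big_split /= rel_Sk addr0.
Qed.

Hypothesis D_const : forall k, D k = 0 -> exists c, k = iota c.

Lemma C_indep_wronskian n (b : 'I_n -> K) : C_indep iota b ->
  forall s (a : 'I_n -> K), (#|[pred i | a i != 0%R]| <= s)%N ->
  (forall k, (k < s)%N -> \sum_i a i * iter k D (b i) = 0) -> forall i, a i = 0.
Proof.
move=> b_indep; elim=> [|s IHs] a supp_a rel_a i.
  rewrite leqn0 in supp_a.
  by have := card0_eq (eqP supp_a) i; rewrite !inE => /negbFE/eqP.
have [/forallP a0|] := boolP [forall i, a i == 0]; first exact/eqP/a0.
rewrite negb_forall => /existsP[i0 a_i0]; exfalso.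
(* Normalized so that c i0 = 1, the relations for c differentiate into
   relations for D \o c, whose support misses i0; so c is constant. *)
pose c i := a i / a i0.
have c_i0 : c i0 = 1 by rewrite /c divff.
have rel_c k : (k < s.+1)%N -> \sum_i c i * iter k D (b i) = 0.
  move=> lt_k; rewrite /c; under eq_bigr do rewrite mulrAC.
  by rewrite -mulr_suml rel_a ?mul0r.
have Dc0 : forall i, D (c i) = 0.
  apply: IHs => [|k lt_ks].
    rewrite -ltnS (leq_trans _ supp_a) // proper_card //; apply/properP; split.
      apply/subsetP => j; rewrite !inE; apply: contraNN => /eqP aj0.
      by rewrite /c aj0 mul0r derivation0.
    by exists i0; rewrite !inE ?c_i0 ?derivation1 ?eqxx.
  by apply: derivation_relation; apply: rel_c; [exact: ltnW | ].
have /fin_all_exists[cc c_cc] : forall j, exists c0 : C, c j = iota c0.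
  by move=> j; apply: D_const.
have cc0 : cc i0 = 0.
  by apply: b_indep; rewrite -[RHS](rel_c 0%N) //; apply: eq_bigr => j _; rewrite c_cc.
by move: c_i0; rewrite c_cc cc0 rmorph0 => /eqP; rewrite eq_sym oner_eq0.
Qed.

Lemma C_indep_wronskian_row_free n m (b : 'I_n -> K) : C_indep iota b ->
  (n <= m)%N -> row_free (\matrix_(i < n, k < m) iter k D (b i)).
Proof.
move=> b_indep le_nm; set W := \matrix_(i, k) _.
suff W_inj (u : 'rV_n) : u *m W = 0 -> u = 0.
  rewrite -kermx_eq0; apply/eqP/row_matrixP => i; rewrite row0.
  by apply: W_inj; apply/sub_kermxP; exact: row_sub.
move=> uW0; apply/rowP => i; rewrite mxE.
apply: (C_indep_wronskian b_indep (s := n)) => [|k lt_kn].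
  by rewrite (leq_trans (max_card _)) ?card_ord.
have := congr1 (fun v : 'rV_m => v 0 (Ordinal (leq_trans lt_kn le_nm))) uW0.
by rewrite !mxE => uWk; rewrite -[RHS]uWk; apply: eq_bigr => j _; rewrite mxE.
Qed.

Lemma dimC_leq_rank (V : K -> Prop) r s q (N : 'M[K]_(s.+1, q)) :
    (r <= s.+1)%N -> dimC_eq iota V r ->
    (forall h, V h -> ((wvec D s h)^T <= N^T)%MS) ->
  (r <= \rank N)%N.
Proof.
move=> le_rs [b [b_indep b_span]] wvec_sub.
set W := \matrix_(i < r, k < s.+1) iter k D (b i).
have W_sub : (W <= N^T)%MS.
  apply/row_subP => i.
  have -> : row i W = (wvec D s (b i))^T by apply/rowP => k; rewrite !mxE.
  apply/wvec_sub/b_span; exists (fun k => (k == i)%:R).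
  rewrite (bigD1 i) //= eqxx rmorph1 mul1r big1 ?addr0 // => k /negbTE->.
  by rewrite rmorph0 mul0r.
rewrite -mxrank_tr -(eqP (C_indep_wronskian_row_free b_indep le_rs)).
exact: mxrankS.
Qed.

End Wronskian.

Section RowCompletion.

Variables (K : fieldType) (T : finType) (n : nat) (e : T -> 'rV[K]_n).

Definition optrows m (tau : 'I_m -> option T) : 'M[K]_(m, n) :=
  \matrix_(a, c) oapp (fun t => e t 0 c) 0 (tau a).

Lemma row_optrows m (tau : 'I_m -> option T) a :
  row a (optrows tau) = oapp e 0 (tau a).
Proof. by apply/rowP => c; rewrite !mxE; case: (tau a) => [t|]; rewrite ?mxE. Qed.

Hypothesis e_span : forall p (U : 'M[K]_(p, n)), (forall t, (e t <= U)%MS) -> row_full U.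

Lemma row_full_col_mxl p q (U : 'M[K]_(p, n)) (W : 'M[K]_(q, n)) :
  row_full U -> row_full (col_mx U W).
Proof. by rewrite -!sub1mx => /submx_trans->; rewrite // -addsmxE addsmxSl. Qed.

Lemma optrows_completion m p (U : 'M[K]_(p, n)) : (n <= \rank U + m)%N ->
  exists tau : 'I_m -> option T, row_full (col_mx U (optrows tau)).
Proof.
elim: m p U => [|m IHm] p U rankU.
  exists (fun _ => None); apply: row_full_col_mxl.
  by rewrite /row_full eqn_leq rank_leq_col -(addn0 (\rank U)).
have [fullU|not_fullU] := boolP (row_full U).
  by exists (fun _ => None); exact: row_full_col_mxl.
have /existsP[t etU] : [exists t, ~~ (e t <= U)%MS].
  by rewrite -negb_forall; apply: contra not_fullU => /forallP; exact: e_span.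
have U_lt : (U < col_mx U (e t))%MS.
  by rewrite ltmxE -!addsmxE addsmxSl addsmx_sub submx_refl.
have [tau' full'] : exists tau' : 'I_m -> option T,
    row_full (col_mx (col_mx U (e t)) (optrows tau')).
  apply: IHm; rewrite (leq_trans rankU) // addnS -addSn leq_add2r.
  by move: U_lt; rewrite ltmxErank => /andP[].
exists (fun a => if unlift ord0 a is Some j then tau' j else Some t).
set S := optrows _; have S_sub : (S <= col_mx U S)%MS by rewrite -addsmxE addsmxSr.
move: full'; rewrite -!sub1mx => /submx_trans->//; rewrite !col_mx_sub.
apply/andP; split; [apply/andP; split|]; first by rewrite -addsmxE addsmxSl.
  have -> : e t = row ord0 S by rewrite row_optrows unlift_none.
  exact: submx_trans (row_sub _ _) S_sub.
apply/row_subP => j; apply: submx_trans S_sub.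
have -> : row j (optrows tau') = row (lift ord0 j) S by rewrite !row_optrows liftK.
exact: row_sub.
Qed.

End RowCompletion.

Section MonomialBlocks.

Variables (K : fieldType) (q n : nat) (g : 'I_q -> K).
Hypothesis g_inj : injective g.

Lemma powers_unitmx : \matrix_(d < q, j < q) g j ^+ d \in unitmx.
Proof.
have -> : \matrix_(d < q, j < q) g j ^+ d = Vandermonde q (\row_j g j).
  by apply/matrixP => d j; rewrite !mxE.
rewrite unitmxE det_Vandermonde unitfE; apply/prodf_neq0 => i _.
apply/prodf_neq0 => j lt_ij; rewrite !mxE subr_eq0; apply: contraTneq lt_ij.
by move/g_inj->; rewrite ltnn.
Qed.

Definition monomial_block (t : 'I_n * 'I_q) : 'M[K]_(q, n) :=
  \matrix_(j, k) (if k == t.1 then g j ^+ t.2 else 0).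

Lemma monomial_blocks_span p (U : 'M[K]_(p, q * n)) :
  (forall t, (mxvec (monomial_block t) <= U)%MS) -> row_full U.
Proof.
move=> blocks_sub; rewrite -sub1mx; apply/row_subP => c; rewrite row1.
case/mxvec_indexP: c => j k; rewrite -mxvec_delta.
pose W := invmx (\matrix_(d < q, j < q) g j ^+ d).
have -> : delta_mx j k = \sum_(d < q) W j d *: monomial_block (k, d).
  apply/matrixP => j' k'; rewrite summxE !mxE.
  under eq_bigr do rewrite !mxE /=.
  have [_|ne_k'k] := eqVneq k' k; last by rewrite andbF big1 // => d _; rewrite mulr0.
  have := congr1 (fun M : 'M[K]_q => M j j') (mulVmx powers_unitmx).
  by rewrite !mxE andbT eq_sym => <-; apply: eq_bigr => d _; rewrite !mxE.
rewrite linear_sum; apply: summx_sub => d _.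
by rewrite linearZ scalemx_sub ?blocks_sub.
Qed.

End MonomialBlocks.

Section MonomialRows.

Variables (C K : fieldType) (iota : {rmorphism C -> K}) (rL rP m : nat).

Definition monomial_rows (tau : 'I_m -> option ('I_rL * 'I_rP)) : 'M[{poly C}]_(m, rL) :=
  \matrix_(a, k)
    oapp (fun t : 'I_rL * 'I_rP => if k == t.1 then 'X^(t.2) else 0) 0 (tau a).

Lemma size_monomial_rows tau a k : (size (monomial_rows tau a k) <= rP)%N.
Proof.
rewrite mxE; case: (tau a) => [[k0 d]|] /=; last by rewrite size_poly0.
by case: ifP; rewrite ?size_polyXn ?size_poly0.
Qed.

Lemma blockrow_eval_monomial_rows (g : 'I_rP -> K) tau :
  blockrow (fun j => map_mx (fun p => evC iota p (g j)) (monomial_rows tau)) =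
  optrows (fun t => mxvec (monomial_block g t)) tau.
Proof.
apply/matrixP => a c; rewrite !mxE; case/mxvec_indexP: c => j k.
rewrite !mxvecE !mxE /evC; case: (tau a) => [t|] /=; last by rewrite map_poly0 horner0.
rewrite mxvecE mxE; case: ifP => _; first by rewrite map_polyXn hornerXn.
by rewrite map_poly0 horner0.
Qed.

End MonomialRows.

Theorem lemma6
  (C : fieldType) (Cchar0 : [pchar C] =i pred0)
  (K : fieldType) (iota : {rmorphism C -> K}) (D : K -> K) (x : K)
  (HK : diff_ext_Cx iota D x)
  (* L in C[x][d] of order rL *)
  (rL : nat) (L : seq {poly C}) (HLsize : size L = rL.+1) (HLlead : L`_rL != 0)
  (* P in C[x][y] of y-degree rP *)
  (rP : nat) (P : {poly {poly C}}) (HPsize : size P = rP.+1)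
  (HPsqf : sqfree_Cx_y P)
  (E : closedFieldType) (iotaE : {rmorphism C -> E})
  (HE : is_alg_closure iotaE) (HPnody : no_y_divisor iotaE P)
  (* f_1..f_rL : C-linearly independent solutions of L *)
  (f : 'I_rL -> K) (Hfsol : forall i, applyL iota D x L (f i) = 0)
  (Hfind : C_indep iota f)
  (* g_1..g_rP : distinct solutions of P *)
  (g : 'I_rP -> K) (Hgsol : forall j, ev2 iota P x (g j) = 0)
  (Hginj : injective g)
  (* fg i j k represents f_i^(k) o g_j; fg i j 0 = f_i o g_j *)
  (fg : 'I_rL -> 'I_rP -> nat -> K)
  (Hchain : forall i j k, D (fg i j k) = fg i j k.+1 * D (g j))
  (HLcomp : forall i j, \sum_(k < size L) evC iota L`_k (g j) * fg i j k = 0)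
  (* V = C-span of all f_i o g_j, r = dim_C V *)
  (r : nat)
  (Hr : dimC_eq iota
          (fun h => exists c : 'I_rL -> 'I_rP -> C,
              h = \sum_(i < rL) \sum_(j < rP) iota (c i j) * fg i j 0) r)
  (A : 'M[{poly {poly C}}]_(r.+1, rL))
  (HA : forall h : K,
      (exists c : 'I_rL -> 'I_rP -> C,
          h = \sum_(i < rL) \sum_(j < rP) iota (c i j) * fg i j 0)
      <-> ((wvec D r h)^T <=
           (blockrow (fun j : 'I_rP => map_mx (fun p => ev2 iota p x (g j)) A))^T)%MS) :
  exists B : 'M[{poly C}]_(rL * rP - r, rL),
    (forall a b, (size (B a b) <= rP)%N) /\
    \rank (col_mx
             (blockrow (fun j : 'I_rP => map_mx (fun p => ev2 iota p x (g j)) A))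
             (blockrow (fun j : 'I_rP => map_mx (fun p => evC iota p (g j)) B)))
      = (rL * rP)%N.
Proof.
case: HK => D_derivation _ _ D_const.
set M := blockrow _.
have rankM : (r <= \rank M)%N.
  by apply: (dimC_leq_rank D_derivation _ (leqnSn r) Hr) => [k /D_const | h /(HA h).1].
have rank_gap : (rP * rL <= \rank M + (rL * rP - r))%N.
  by rewrite [X in (X <= _)%N]mulnC addnC -leq_subLR (leq_trans _ rankM) // leq_subCl.
have [tau M_tau_full] := optrows_completion (monomial_blocks_span Hginj) rank_gap.
exists (monomial_rows C tau); split; first exact: size_monomial_rows.
by rewrite blockrow_eval_monomial_rows (eqP M_tau_full) mulnC.
Qed.
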